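(* Let $f:\mathbb{R}^n\to\mathbb{R}$ be twice continuously differentiable, $x_0\in\mathbb{R}^n$, $S_f=\{x: f(x)\le f(x_0)\}$. Assume $\|\nabla f(x)-\nabla f(y)\|\le L_C\|x-y\|$ for all $x,y\in S_f$, and that there are constants $M\ge m>0$ with $M\|z\|^2\ge z^{T}\nabla^2 f(x)z\ge m\|z\|^2$ for all $x\in S_f$, $z\in\mathbb{R}^n$. Let $\{x_k\}$ and the time-stepping sizes $\{\Delta t_k\}$ be generated by the Eptctr algorithm described in the context. Then there exists a positive constant $\delta_{\Delta t}$ such that $\Delta t_k \ge \gamma_2\,\delta_{\Delta t}$ for all $k=1,2,\dots$.
   Context: Eptctr algorithm (explicit pseudo-transient continuation with trust-region updating and switching preconditioning). Parameters: $\eta_a=10^{-6}$, $\eta_1=0.25$, $\gamma_1=2$, $\eta_2=0.75$, $\gamma_2=0.5$, $\theta=10^{-6}$, initial $\Delta t_0=10^{-2}$, counter $K_{bad}=0$, $y_{-1}=s_{-1}=0$. Notation: $g_k=\nabla f(x_k)$, $B_k=\nabla^2 f(x_k)$. Initially $s_0^N$ solves $B_0 s_0^N=-g_0$. At iteration $k$: if the previous trial step was accepted (or $k=0$), compute the direction $s_k^N$ as follows: if $|s_{k-1}^{T}y_{k-1}|>\theta\|s_{k-1}\|^2$ and $K_{bad}<5$, set $s_k^N=-H_kg_k$ with $H_k = I - \frac{y_{k-1}s_{k-1}^{T}+s_{k-1}y_{k-1}^{T}}{y_{k-1}^{T}s_{k-1}} + 2\frac{\|y_{k-1}\|^2}{(y_{k-1}^{T}s_{k-1})^2}s_{k-1}s_{k-1}^{T}$;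 otherwise solve $B_k s_k^N=-g_k$. If the previous trial step was rejected, the previous direction is reused. Set $s_k=\frac{\Delta t_k}{1+\Delta t_k}s_k^N$ and compute $\rho_k=\frac{f(x_k)-f(x_k+s_k)}{m_k(0)-m_k(s_k)}$ with $m_k(s)=\frac{1+0.5\Delta t_k}{1+\Delta t_k}g_k^{T}s$. If $\rho_k\le\eta_a$ the step is rejected ($x_{k+1}=x_k$, and the pair $(s,y)$ used for $H$ is not changed); otherwise it is accepted: $x_{k+1}=x_k+s_k$, $y_k=g_{k+1}-g_k$, $s_k=x_{k+1}-x_k$. Time step update: if $|1-\rho_k|\ge\eta_2$ then $K_{bad}\leftarrow K_{bad}+1$ and $\Delta t_{k+1}=\gamma_2\Delta t_k$; else if $|1-\rho_k|\ge\eta_1$ then $\Delta t_{k+1}=\Delta t_k$; else $\Delta t_{k+1}=\gamma_1\Delta t_k$. The algorithm is considered as generating an infinite sequence (the stopping test $\|g_k\|\le\epsilon$ is not triggered). *)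

From HB Require Import structures.
From mathcomp Require Import all_boot all_order all_algebra.
From mathcomp Require Import all_classical all_reals all_analysis.
Set Implicit Arguments. Unset Strict Implicit. Unset Printing Implicit Defensive.
Import Order.TTheory GRing.Theory Num.Theory.
Import numFieldNormedType.Exports.
Local Open Scope ring_scope.

Section Eptctr.
Variables (R : realType) (n : nat).
Implicit Types (u v : 'cV[R]_n) (f : 'cV[R]_n -> R).

Definition dot u v : R := (u^T *m v) 0 0.
Definition nrm u : R := Num.sqrt (dot u u).

Definition evec (i : 'I_n) : 'cV[R]_n := delta_mx i 0.

Definition grad f (x : 'cV[R]_n) : 'cV[R]_n := \col_i ('D_(evec i) f x).
Definition hess f (x : 'cV[R]_n) : 'M[R]_n :=
  \matrix_(i, j) ('D_(evec j) (fun y => grad f y i 0) x).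

Definition C2 f : Prop :=
  (forall x, differentiable f x) /\ (forall x, differentiable (grad f) x) /\
  continuous (hess f).

Definition eta_a : R := 10 ^- 6.
Definition eta_1 : R := 1 / 4.
Definition gamma_1 : R := 2.
Definition eta_2 : R := 3 / 4.
Definition gamma_2 : R := 1 / 2.
Definition theta : R := 10 ^- 6.
Definition dt0 : R := 10 ^- 2.

Definition Hmat (s y : 'cV[R]_n) : 'M[R]_n :=
  1%:M - (dot y s)^-1 *: (y *m s^T + s *m y^T)
       + (2 * nrm y ^+ 2 / (dot y s) ^+ 2) *: (s *m s^T).

Record state := St {
  st_x   : 'cV[R]_n;
  st_dt  : R;
  st_kb  : nat;
  st_dir : 'cV[R]_n;   (* previous direction s^N (reused after rejection) *)
  st_s   : 'cV[R]_n;   (* last accepted step s (for H) *)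
  st_y   : 'cV[R]_n;   (* last accepted y (for H) *)
  st_acc : bool        (* previous trial step accepted (true initially, k=0) *)
}.

Definition init (x0 : 'cV[R]_n) : state := St x0 dt0 0 0 0 0 true.

Definition step f (st : state) : state :=
  let x := st_x st in let dt := st_dt st in let kb := st_kb st in
  let g := grad f x in
  let dir :=
    if st_acc st then
      (if (`|dot (st_s st) (st_y st)| > theta * nrm (st_s st) ^+ 2) && (kb < 5)%N
       then - (Hmat (st_s st) (st_y st) *m g)
       else - (invmx (hess f x) *m g))
    else st_dir st in
  let s := (dt / (1 + dt)) *: dir in
  let model (v : 'cV[R]_n) := (1 + dt / 2) / (1 + dt) * dot g v in
  let rho := (f x - f (x + s)) / (model 0 - model s) in
  let acc := rho > eta_a in
  let x' := if acc then x + s else x in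
  let s' := if acc then s else st_s st in
  let y' := if acc then grad f x' - g else st_y st in
  let kb' := if `|1 - rho| >= eta_2 then kb.+1 else kb in
  let dt' := if `|1 - rho| >= eta_2 then gamma_2 * dt
             else if `|1 - rho| >= eta_1 then dt else gamma_1 * dt in
  St x' dt' kb' dir s' y' acc.

Fixpoint eptctr f (x0 : 'cV[R]_n) (k : nat) : state :=
  match k with 0 => init x0 | k'.+1 => step f (eptctr f x0 k') end.

Definition xk f x0 k := st_x (eptctr f x0 k).
Definition dtk f x0 k := st_dt (eptctr f x0 k).

End Eptctr.

(* Both search directions d are gradient related on the sublevel set S_f: with g the gradient,
   ||d||^2 <= K (-g'd).  For the Newton direction this is strong convexity (K = 1/m); for d = -H g
   the curvature test |s'y| > theta ||s||^2 and ||y|| <= L ||s|| give ||H g|| <= c ||g||, while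
   g'H g >= ||g||^2 / 2.  So the trial step s = dt/(1+dt) d satisfies L ||s||^2 <= L K dt q with
   q = -g's the predicted decrease.  A continuation argument keeps the segment [x, x + s] inside
   S_f, where the gradient is L-Lipschitz, hence the Taylor error |f(x+s) - f(x) + q| is at most
   L ||s||^2.  Once dt <= delta this forces |1 - rho| < 3/4, so the time step is only ever halved
   when it exceeds delta, and dt_k >= gamma_2 delta follows by induction. *)

From HB Require Import structures.
From mathcomp Require Import all_boot all_order all_algebra.
From mathcomp Require Import all_classical all_reals all_analysis.
From mathcomp Require Import ring lra.
Import Order.TTheory GRing.Theory Num.Theory.
Import numFieldNormedType.Exports.
Local Open Scope ring_scope.
Set Implicit Arguments. Unset Strict Implicit.

Section RealLine.
Variable R : realType.
Local Open Scope classical_set_scope.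
Implicit Types (phi dphi : R -> R) (l t : R).

Lemma lt_right_of_derive_lt0 phi t (d : R) : is_derive t 1 phi d -> d < 0 ->
  exists2 e : R, 0 < e & forall u, t < u < t + e -> phi u < phi t.
Proof.
move=> [phi' <-] d_lt0.
have cv : (fun h : R => h^-1 *: ((phi \o shift t) (h *: 1) - phi t)) @ 0^' --> 'D_1 phi t.
  exact: phi'.
have := @cvgr_lt R _ _ _ _ _ cv _ d_lt0; rewrite near_withinE /=.
move=> /(_ (dnbhs_filter _)) /nbhs_ballP [e e_gt0 He].
exists e => // u /andP [tu ute].
have ut_gt0 : 0 < u - t by rewrite subr_gt0.
have /He : ball (0 : R) e (u - t).
  by rewrite /ball /= sub0r normrN gtr0_norm // ltrBlDl.
rewrite gt_eqF //= => /(_ isT); rewrite /shift /= -[(u - t)%:A]/((u - t) * 1) mulr1.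
by rewrite subrK -[_ *: _]/(_ * _) pmulr_rlt0 ?invr_gt0 // subr_lt0.
Qed.

Lemma mvt_taylor_le phi dphi (P : R -> Prop) l t :
  (forall u : R, is_derive u 1 phi (dphi u)) ->
  (forall u, 0 <= u -> P u -> `|dphi u - dphi 0| <= l * u) ->
  0 < t -> (forall u, 0 <= u < t -> P u) ->
  `|phi t - phi 0 - t * dphi 0| <= l * t ^+ 2.
Proof.
move=> phi' hlip t_gt0 hP.
have phi_cont : continuous phi.
  by move=> u; apply/differentiable_continuous/derivable1_diffP; case: (phi' u).
have [c /[!in_itv] /= /andP [c_gt0 ct] ->] :=
  MVT t_gt0 (fun u _ => phi' u) (continuous_subspaceT phi_cont).
have c_lip : `|dphi c - dphi 0| <= l * c.
  by apply: hlip (hP c _); rewrite ?ltW ?c_gt0 ?ct.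
have l_ge0 : 0 <= l by rewrite -(pmulr_lge0 _ c_gt0) (le_trans _ c_lip).
rewrite subr0 mulrC -mulrBr normrM gtr0_norm // expr2 [l * _]mulrC -mulrA.
by rewrite ler_pM2l // (le_trans c_lip) // mulrC ler_wpM2l // ltW.
Qed.
End RealLine.

Section SublevelSegment.
Variable R : realType.
Local Open Scope classical_set_scope.
Variables (phi dphi : R -> R) (c0 q l : R).
Hypothesis phi' : forall u : R, is_derive u 1 phi (dphi u).
Hypothesis phi0_le : phi 0 <= c0.
Hypothesis q_gt0 : 0 < q.
Hypothesis dphi0 : dphi 0 = - q.
Hypothesis l_ge0 : 0 <= l.
Hypothesis l_le : l <= q / 2.
Hypothesis dphi_lip : forall u, 0 <= u -> phi u <= c0 -> `|dphi u - dphi 0| <= l * u.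

Lemma descent_in_sublevel t : 0 < t <= 1 -> (forall u, 0 <= u < t -> phi u <= c0) ->
  phi t <= phi 0 - t * q / 2.
Proof.
move=> /andP [t_gt0 t_le1] sub.
have := le_trans (ler_norm _) (mvt_taylor_le phi' dphi_lip t_gt0 sub).
have : l * t ^+ 2 <= q / 2 * t.
  by rewrite expr2 mulrA ler_wpM2r ?(ltW t_gt0) // -[q / 2]mulr1 ler_pM // ltW.
rewrite dphi0 expr2; nra.
Qed.

Lemma sublevel_extend ts : 0 <= ts < 1 -> (forall u, 0 <= u <= ts -> phi u <= c0) ->
  exists2 v, ts < v <= 1 & forall u, 0 <= u <= v -> phi u <= c0.
Proof.
move=> /andP [ts_ge0 ts_lt1] sub_ts.
have phi_ts : phi ts <= c0 by apply: sub_ts; rewrite ts_ge0 lexx.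
have dphi_ts_lt0 : dphi ts < 0.
  have := le_trans (ler_norm _) (dphi_lip ts_ge0 phi_ts).
  have : l * ts <= q / 2 by rewrite -[q / 2]mulr1 ler_pM // ltW.
  by rewrite dphi0; move: q_gt0; lra.
have [e e_gt0 phi_lt] := lt_right_of_derive_lt0 (phi' ts) dphi_ts_lt0.
exists (Num.min (ts + e / 2) 1); first by rewrite lt_min ts_lt1 ltrDl divr_gt0 // ge_min lexx orbT.
move=> u /andP [u_ge0 u_le]; have [u_le_ts|ts_lt_u] := leP u ts.
  by apply: sub_ts; rewrite u_ge0.
apply: le_trans (ltW (phi_lt u _)) phi_ts.
rewrite ts_lt_u (le_lt_trans u_le) // gt_min ltrD2l ltr_pdivrMr // ltr_pMr //.
by rewrite ltr1n.
Qed.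

Lemma sublevel_segment t : 0 <= t <= 1 -> phi t <= c0.
Proof.
pose S := [set t : R | 0 <= t <= 1 /\ forall u, 0 <= u <= t -> phi u <= c0].
have S0 : S 0.
  split=> [|u /andP [u_ge0 u_le0]]; first by rewrite lexx ler01.
  by have -> : u = 0 by apply/le_anti; rewrite u_ge0 u_le0.
have supS : has_sup S by split; [exists 0 | exists 1 => v [] /andP []].
set ts := sup S.
have ts_ge0 : 0 <= ts by apply: sup_upper_bound.
have ts_le1 : ts <= 1 by apply: ge_sup; [exists 0 | move=> v [] /andP []].
have below_ts u : 0 <= u < ts -> phi u <= c0.
  move=> /andP [u_ge0 uts]; have ts_u : 0 < ts - u by rewrite subr_gt0.
  have [v [_ Sv]] := sup_adherent ts_u supS.
  by rewrite opprB addrCA subrr addr0 => /ltW uv; apply: Sv; rewrite u_ge0.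
have sub_ts u : 0 <= u <= ts -> phi u <= c0.
  move=> /andP [u_ge0 u_le]; have [->|u_neq0] := eqVneq u 0; first by [].
  apply: le_trans (descent_in_sublevel _ _) (le_trans _ phi0_le).
  - by rewrite lt_def u_neq0 u_ge0 (le_trans u_le).
  - by move=> v /andP [v_ge0 vu]; apply: below_ts; rewrite v_ge0 (lt_le_trans vu).
  - by rewrite gerBl divr_ge0 // mulr_ge0 // ltW.
have [ts_lt1|ts_gt1|ts_eq1] := ltgtP ts 1.
- have ts_in : 0 <= ts < 1 by rewrite ts_ge0.
  have [v /andP [ts_lt_v v_le1] sub_v] := sublevel_extend ts_in sub_ts.
  have /(sup_upper_bound supS) : S v by split=> //; rewrite v_le1 andbT (le_trans ts_ge0) ?ltW.
  by rewrite leNgt ts_lt_v.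
- by move: ts_le1; rewrite leNgt ts_gt1.
- by rewrite -ts_eq1; apply: sub_ts.
Qed.

Lemma taylor_segment : `|phi 1 - phi 0 - dphi 0| <= l.
Proof.
have sub u : 0 <= u < 1 -> phi u <= c0.
  by case/andP=> u_ge0 /ltW u_le1; apply: sublevel_segment; rewrite u_ge0.
by have := mvt_taylor_le phi' dphi_lip ltr01 sub; rewrite mul1r expr1n mulr1.
Qed.
End SublevelSegment.

Section Euclidean.
Variables (R : realType) (n : nat).
Implicit Types (u v w : 'cV[R]_n).

Lemma dotE u v : dot u v = \sum_i u i 0 * v i 0.
Proof. by rewrite /dot !mxE; apply: eq_bigr => i _; rewrite !mxE. Qed.

Lemma dotC u v : dot u v = dot v u.
Proof. by rewrite !dotE; apply: eq_bigr => i _; rewrite mulrC. Qed.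

Lemma dotDl u v w : dot (u + v) w = dot u w + dot v w.
Proof. by rewrite !dotE -big_split; apply: eq_bigr => i _; rewrite !mxE mulrDl. Qed.

Lemma dotDr u v w : dot u (v + w) = dot u v + dot u w.
Proof. by rewrite dotC dotDl !(dotC u). Qed.

Lemma dotZl (c : R) u v : dot (c *: u) v = c * dot u v.
Proof. by rewrite !dotE mulr_sumr; apply: eq_bigr => i _; rewrite !mxE mulrA. Qed.

Lemma dotZr (c : R) u v : dot u (c *: v) = c * dot u v.
Proof. by rewrite dotC dotZl dotC. Qed.

Lemma dotNl u v : dot (- u) v = - dot u v.
Proof. by rewrite -scaleN1r dotZl mulN1r. Qed.

Lemma dotNr u v : dot u (- v) = - dot u v.
Proof. by rewrite dotC dotNl dotC. Qed.

Lemma dotBl u v w : dot (u - v) w = dot u w - dot v w.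
Proof. by rewrite dotDl dotNl. Qed.

Lemma dotBr u v w : dot u (v - w) = dot u v - dot u w.
Proof. by rewrite dotDr dotNr. Qed.

Lemma dot0r u : dot u 0 = 0.
Proof. by rewrite -(scale0r 0) dotZr mul0r. Qed.

Lemma dot_ge0 u : 0 <= dot u u.
Proof. by rewrite dotE sumr_ge0 // => i _; rewrite -expr2 sqr_ge0. Qed.

Lemma dot_gt0 u : u != 0 -> 0 < dot u u.
Proof.
move=> u_neq0; rewrite lt_def dot_ge0 andbT; apply: contra u_neq0 => /eqP.
rewrite dotE => /psumr_eq0P u0; apply/eqP/matrixP => i j; rewrite ord1 mxE.
by apply/eqP; rewrite -[_ == 0]orbb -mulf_eq0 u0 // => k _; rewrite -expr2 sqr_ge0.
Qed.

Lemma nrm_ge0 u : 0 <= nrm u.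
Proof. exact: sqrtr_ge0. Qed.

Lemma nrm_sqr u : nrm u ^+ 2 = dot u u.
Proof. by rewrite sqr_sqrtr // dot_ge0. Qed.

Lemma nrm0 : nrm (0 : 'cV[R]_n) = 0.
Proof. by rewrite /nrm dot0r sqrtr0. Qed.

Lemma nrmZ (c : R) u : nrm (c *: u) = `|c| * nrm u.
Proof. by rewrite /nrm dotZl dotZr mulrA -expr2 sqrtrM ?sqr_ge0 // sqrtr_sqr. Qed.

Lemma nrmN u : nrm (- u) = nrm u.
Proof. by rewrite -scaleN1r nrmZ normrN normr1 mul1r. Qed.

Lemma dot_sqr_le u v : dot u v ^+ 2 <= dot u u * dot v v.
Proof.
have [->|v_neq0] := eqVneq v 0; first by rewrite !dot0r expr0n mulr0.
have vv_gt0 := dot_gt0 v_neq0.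
have := dot_ge0 (u - (dot u v / dot v v) *: v).
rewrite !(dotBl, dotBr, dotZl, dotZr) (dotC v u).
have -> : dot u u - dot u v / dot v v * dot u v -
    dot u v / dot v v * (dot u v - dot u v / dot v v * dot v v)
    = dot u u - dot u v ^+ 2 / dot v v by field; rewrite gt_eqF.
by rewrite subr_ge0 ler_pdivrMr.
Qed.

Lemma cauchy_schwarz u v : `|dot u v| <= nrm u * nrm v.
Proof.
rewrite -ler_sqr ?nnegrE ?mulr_ge0 ?nrm_ge0 // real_normK ?num_real //.
by rewrite exprMn !nrm_sqr dot_sqr_le.
Qed.

Lemma ler_nrmD u v : nrm (u + v) <= nrm u + nrm v.
Proof.
rewrite -ler_sqr ?nnegrE ?addr_ge0 ?nrm_ge0 // sqrrD !nrm_sqr.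
rewrite dotDl !dotDr (dotC v u).
have := le_trans (ler_norm _) (cauchy_schwarz u v); lra.
Qed.

Lemma ler_nrmB u v : nrm (u - v) <= nrm u + nrm v.
Proof. by rewrite -(nrmN v) ler_nrmD. Qed.

Lemma mulmx_outer u v w : u *m v^T *m w = dot v w *: u.
Proof.
rewrite -mulmxA -mul_mx_scalar; congr (_ *m _).
by apply/matrixP => i j; rewrite !ord1 /dot !mxE eqxx mulr1n.
Qed.
End Euclidean.

Section SearchDirections.
Variables (R : realType) (n : nat).
Implicit Types (g d s y : 'cV[R]_n) (K m : R).

Definition gradient_related K g d := 0 < - dot g d /\ nrm d ^+ 2 <= K * - dot g d.

Lemma gradient_relatedW K K' g d :
  K <= K' -> gradient_related K g d -> gradient_related K' g d.
Proof. by move=> KK' [gd_gt0 d_le]; split=> //; rewrite (le_trans d_le) // ler_wpM2r // ltW. Qed.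

Lemma posdef_unitmx (B : 'M[R]_n) m :
  0 < m -> (forall z, m * nrm z ^+ 2 <= dot z (B *m z)) -> B \in unitmx.
Proof.
move=> m_gt0 B_pd; rewrite unitmxE unitfE; apply/negP => /det0P [v v_neq0 vB].
have vBv : dot v^T (B *m v^T) = 0 by rewrite /dot trmxK mulmxA vB mul0mx mxE.
have := B_pd v^T; rewrite nrm_sqr vBv.
by rewrite pmulr_rle0 // leNgt dot_gt0 // -trmx0 (can_eq trmxK).
Qed.

Lemma gradient_related_newton (B : 'M[R]_n) m g :
  0 < m -> (forall z, m * nrm z ^+ 2 <= dot z (B *m z)) -> g != 0 ->
  gradient_related m^-1 g (- (invmx B *m g)).
Proof.
move=> m_gt0 B_pd g_neq0; set d := - (invmx B *m g).
have Bd : B *m d = - g by rewrite mulmxN mulKVmx // (posdef_unitmx m_gt0 B_pd).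
have gd : - dot g d = dot d (B *m d) by rewrite Bd dotNr dotC.
have d_neq0 : d != 0 by apply: contraNneq g_neq0 => d0; rewrite -oppr_eq0 -Bd d0 mulmx0.
have d_pd := B_pd d; rewrite -gd in d_pd.
split; first by rewrite (lt_le_trans _ d_pd) // mulr_gt0 // nrm_sqr dot_gt0.
by rewrite ler_pdivlMl.
Qed.

Lemma Hmat_mul s y g : Hmat s y *m g =
  g - (dot y s)^-1 *: (dot s g *: y + dot y g *: s)
    + (2 * nrm y ^+ 2 / dot y s ^+ 2) *: (dot s g *: s).
Proof. by rewrite /Hmat !mulmxDl mul1mx mulNmx -!scalemxAl mulmxDl !mulmx_outer. Qed.

Lemma Hmat_descent s y g : dot y s != 0 -> dot g g / 2 <= dot g (Hmat s y *m g).
Proof.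
move=> ys_neq0; have [->|g_neq0] := eqVneq g 0; first by rewrite mulmx0 !dot0r mul0r.
set G := dot g g; set z := dot s g / dot y s; set yg := dot y g.
have G_gt0 : 0 < G by apply: dot_gt0.
have -> : dot g (Hmat s y *m g) = G - 2 * z * yg + 2 * nrm y ^+ 2 * z ^+ 2.
  rewrite Hmat_mul !(dotDr, dotNr, dotZr) (dotC g y) (dotC g s) -/G -/yg /z.
  by field.
have yg_le : yg ^+ 2 <= nrm y ^+ 2 * G by rewrite nrm_sqr dot_sqr_le.
(* [G (rhs - G / 2) >= 2 (G / 2 - z yg)^2] since [yg^2 <= |y|^2 G]. *)
have cs_gap : 0 <= (nrm y ^+ 2 * G - yg ^+ 2) * z ^+ 2 by rewrite mulr_ge0 ?sqr_ge0 ?subr_ge0.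
have square_ge0 := sqr_ge0 (G / 2 - z * yg).
have : 0 <= G * (G - 2 * z * yg + 2 * nrm y ^+ 2 * z ^+ 2 - G / 2) by nra.
by rewrite pmulr_rge0 // subr_ge0.
Qed.

Definition Hmat_bound (th L : R) := 1 + 2 * L / th + 2 * L ^+ 2 / th ^+ 2.

Section HmatBound.
Variables (s y : 'cV[R]_n) (th L : R).
Hypothesis th_gt0 : 0 < th.
Hypothesis L_ge0 : 0 <= L.
Hypothesis curvature : th * nrm s ^+ 2 < `|dot y s|.
Hypothesis y_le : nrm y <= L * nrm s.

Lemma curvature_gt0 : 0 < `|dot y s|.
Proof. by apply: le_lt_trans curvature; rewrite mulr_ge0 ?sqr_ge0 ?ltW. Qed.

Lemma curvature_ratio_le : nrm s ^+ 2 / `|dot y s| <= th^-1.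
Proof. by rewrite ler_pdivrMr ?curvature_gt0 // ler_pdivlMl // ltW. Qed.

Lemma nrm_Hmat_rank2_le g :
  nrm ((dot y s)^-1 *: (dot s g *: y + dot y g *: s)) <= 2 * L / th * nrm g.
Proof.
have ny_ge0 := nrm_ge0 y; have ns_ge0 := nrm_ge0 s; have ng_ge0 := nrm_ge0 g.
have sg_le := cauchy_schwarz s g.
have yg_le : `|dot y g| <= L * nrm s * nrm g.
  by rewrite (le_trans (cauchy_schwarz y g)) // ler_wpM2r.
have sum_le : `|dot s g| * nrm y + `|dot y g| * nrm s <= 2 * L * nrm g * nrm s ^+ 2.
  have := ler_pM (normr_ge0 _) ny_ge0 sg_le y_le.
  have := ler_wpM2r ns_ge0 yg_le; rewrite expr2; lra.
rewrite nrmZ normfV; apply: le_trans (ler_wpM2l _ (ler_nrmD _ _)) _.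
  by rewrite invr_ge0 ltW ?curvature_gt0.
rewrite !nrmZ; apply: le_trans (ler_wpM2l _ sum_le) _; first by rewrite invr_ge0 ltW ?curvature_gt0.
have -> : `|dot y s|^-1 * (2 * L * nrm g * nrm s ^+ 2) =
    2 * L * nrm g * (nrm s ^+ 2 / `|dot y s|) by ring.
rewrite (_ : 2 * L / th * nrm g = 2 * L * nrm g * th^-1); last by ring.
by rewrite ler_wpM2l ?curvature_ratio_le // !mulr_ge0.
Qed.

Lemma nrm_Hmat_rank1_le g :
  nrm ((2 * nrm y ^+ 2 / dot y s ^+ 2) *: (dot s g *: s)) <= 2 * L ^+ 2 / th ^+ 2 * nrm g.
Proof.
have ny_ge0 := nrm_ge0 y; have ns_ge0 := nrm_ge0 s; have ng_ge0 := nrm_ge0 g.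
have a_gt0 := curvature_gt0.
have a2 : dot y s ^+ 2 = `|dot y s| ^+ 2 by rewrite real_normK ?num_real.
rewrite !nrmZ a2 ger0_norm ?divr_ge0 ?mulr_ge0 ?sqr_ge0 //.
have ny2_le : nrm y ^+ 2 <= L ^+ 2 * nrm s ^+ 2.
  by rewrite -exprMn ler_sqr ?nnegrE ?mulr_ge0.
have sgs_le : `|dot s g| * nrm s <= nrm s ^+ 2 * nrm g.
  by rewrite expr2 -mulrA [nrm s * _]mulrC ler_wpM2r ?cauchy_schwarz.
apply: (le_trans (y := 2 * L ^+ 2 * nrm g * (nrm s ^+ 2 / `|dot y s|) ^+ 2)).
  have -> : 2 * L ^+ 2 * nrm g * (nrm s ^+ 2 / `|dot y s|) ^+ 2 =
      2 * (L ^+ 2 * nrm s ^+ 2) / `|dot y s| ^+ 2 * (nrm s ^+ 2 * nrm g).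
    by field; rewrite gt_eqF.
  apply: ler_pM => //; first by rewrite !mulr_ge0 ?invr_ge0 ?sqr_ge0.
    by rewrite mulr_ge0.
  by rewrite ler_wpM2r ?invr_ge0 ?sqr_ge0 // ler_wpM2l.
rewrite (_ : 2 * L ^+ 2 / th ^+ 2 * nrm g = 2 * L ^+ 2 * nrm g * th^-1 ^+ 2); last first.
  by rewrite exprVn; ring.
apply: ler_wpM2l; first by rewrite !mulr_ge0 ?sqr_ge0.
by rewrite ler_sqr ?nnegrE ?divr_ge0 ?sqr_ge0 ?invr_ge0 ?(ltW th_gt0) ?curvature_ratio_le.
Qed.

Lemma nrm_Hmat_mul_le g : nrm (Hmat s y *m g) <= Hmat_bound th L * nrm g.
Proof.
rewrite Hmat_mul /Hmat_bound; apply: le_trans (ler_nrmD _ _) _.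
have := ler_nrmB g ((dot y s)^-1 *: (dot s g *: y + dot y g *: s)).
have := nrm_Hmat_rank2_le g; have := nrm_Hmat_rank1_le g; lra.
Qed.

Lemma gradient_related_Hmat g :
  g != 0 -> gradient_related (2 * Hmat_bound th L ^+ 2) g (- (Hmat s y *m g)).
Proof.
move=> g_neq0; rewrite /gradient_related dotNr opprK nrmN.
have ys_neq0 : dot y s != 0 by rewrite -normr_gt0 curvature_gt0.
have G_gt0 := dot_gt0 g_neq0.
have descent := Hmat_descent g ys_neq0.
split; first by rewrite (lt_le_trans _ descent) // divr_gt0.
have K_ge0 : 0 <= Hmat_bound th L.
  by rewrite /Hmat_bound !addr_ge0 ?divr_ge0 ?mulr_ge0 ?sqr_ge0 ?exprn_ge0 ?(ltW th_gt0).
have : nrm (Hmat s y *m g) ^+ 2 <= Hmat_bound th L ^+ 2 * dot g g.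
  by rewrite -nrm_sqr -exprMn ler_sqr ?nnegrE ?mulr_ge0 ?nrm_ge0 ?nrm_Hmat_mul_le.
have : 0 <= Hmat_bound th L ^+ 2 * (dot g (Hmat s y *m g) - dot g g / 2).
  by rewrite mulr_ge0 ?sqr_ge0 ?subr_ge0.
nra.
Qed.
End HmatBound.
End SearchDirections.

Section GradientCalculus.
Variables (R : realType) (n : nat).

Lemma derive_grad (f : 'cV[R]_n -> R) x v :
  differentiable f x -> 'D_v f x = dot (grad f x) v.
Proof.
move=> df; rewrite deriveE // dotE {1}(matrix_sum_delta v) linear_sum /=.
apply: eq_bigr => i _; rewrite big_ord1 linearZ /= /grad mxE deriveE //.
by rewrite mulrC.
Qed.

Lemma is_derive_line (f : 'cV[R]_n -> R) x s (t : R) :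
  differentiable f (x + t *: s) ->
  is_derive t 1 (fun u : R => f (x + u *: s)) (dot (grad f (x + t *: s)) s).
Proof.
move=> df.
have quotE : (fun h : R => h^-1 *: (((fun u : R => f (x + u *: s)) \o shift t) (h *: 1)
                               - f (x + t *: s)))
  = (fun h : R => h^-1 *: ((f \o shift (x + t *: s)) (h *: s) - f (x + t *: s))).
  apply: funext => h /=; congr (_ *: (f _ - _)).
  by rewrite /shift /= scalerDl -[h%:A]/(h * 1) mulr1 addrCA.
split; first by rewrite /derivable quotE; apply: diff_derivable.
by rewrite /derive quotE -derive_grad.
Qed.
End GradientCalculus.

Lemma ratio_close_to_one (R : realType) (c q e : R) :
  0 <= c <= 1 / 4 -> 0 < q -> `|e| <= q / 8 ->
  `|1 - (q - e) / ((1 - c / 2) * q)| < 3 / 4.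
Proof.
move=> /andP [c_ge0 c_le] q_gt0 e_le.
have den_gt0 : 0 < (1 - c / 2) * q by rewrite mulr_gt0 //; lra.
have -> : 1 - (q - e) / ((1 - c / 2) * q) = (e - c / 2 * q) / ((1 - c / 2) * q).
  by field; rewrite gt_eqF //; lra.
rewrite normrM normfV (gtr0_norm den_gt0) ltr_pdivrMr //.
have cq_le : c * q <= q / 4 by rewrite -ler_pdivlMr // mulrAC mulfV ?gt_eqF // mul1r.
have cq_ge0 : 0 <= c / 2 * q by rewrite mulr_ge0 ?divr_ge0 // ltW.
have := ler_normB e (c / 2 * q); rewrite (ger0_norm cq_ge0).
move: e_le cq_le q_gt0; lra.
Qed.

Section TrialStep.
Variables (R : realType) (n : nat) (f : 'cV[R]_n -> R).
Implicit Type st : state R n.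

Definition trial_dir st : 'cV[R]_n :=
  if st_acc st then
    (if (`|dot (st_s st) (st_y st)| > theta R * nrm (st_s st) ^+ 2) && (st_kb st < 5)%N
     then - (Hmat (st_s st) (st_y st) *m grad f (st_x st))
     else - (invmx (hess f (st_x st)) *m grad f (st_x st)))
  else st_dir st.

Definition trial_step st := (st_dt st / (1 + st_dt st)) *: trial_dir st.

(* Written exactly as in [step], [dot g 0] included, so that [stepE] holds by conversion. *)
Definition ratio st :=
  let x := st_x st in let dt := st_dt st in let s := trial_step st in
  (f x - f (x + s)) /
    ((1 + dt / 2) / (1 + dt) * dot (grad f x) 0 - (1 + dt / 2) / (1 + dt) * dot (grad f x) s).

Lemma stepE st : step f st =
  let rho := ratio st in let acc := eta_a R < rho in
  let x' := if acc then st_x st + trial_step st else st_x st in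
  St x'
     (if eta_2 R <= `|1 - rho| then gamma_2 R * st_dt st
      else if eta_1 R <= `|1 - rho| then st_dt st else gamma_1 R * st_dt st)
     (if eta_2 R <= `|1 - rho| then (st_kb st).+1 else st_kb st)
     (trial_dir st)
     (if acc then trial_step st else st_s st)
     (if acc then grad f x' - grad f (st_x st) else st_y st)
     acc.
Proof. by []. Qed.

Lemma ratioE st : 0 < st_dt st ->
  ratio st = (f (st_x st) - f (st_x st + trial_step st)) /
    ((1 - st_dt st / (1 + st_dt st) / 2) * - dot (grad f (st_x st)) (trial_step st)).
Proof.
move=> dt_gt0; rewrite /ratio dot0r; congr (_ / _).
by field; rewrite gt_eqF // addr_gt0.
Qed.
End TrialStep.

Lemma gradient_relatedZ (R : realType) (n : nat) (K c : R) (g d : 'cV[R]_n) :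
  0 < c -> gradient_related K g d -> gradient_related (K * c) g (c *: d).
Proof.
move=> c_gt0 [gd_gt0 d_le]; rewrite /gradient_related nrmZ gtr0_norm // dotZr -mulrN.
split; first by rewrite mulr_gt0.
rewrite (_ : K * c * (c * - dot g d) = c ^+ 2 * (K * - dot g d)); last by ring.
by rewrite exprMn ler_wpM2l ?sqr_ge0.
Qed.

Section EptctrAnalysis.
Variables (R : realType) (n : nat) (f : 'cV[R]_n -> R) (x0 : 'cV[R]_n) (L m : R).
Hypothesis f_diff : forall x, differentiable f x.
Hypothesis grad_lip : forall x y, f x <= f x0 -> f y <= f x0 ->
  nrm (grad f x - grad f y) <= L * nrm (x - y).
Hypothesis L_ge0 : 0 <= L.
Hypothesis m_gt0 : 0 < m.
Hypothesis hess_coercive : forall x, f x <= f x0 ->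
  forall z, m * nrm z ^+ 2 <= dot z (hess f x *m z).

Lemma taylor_step x s : f x <= f x0 -> 0 < - dot (grad f x) s ->
  L * nrm s ^+ 2 <= - dot (grad f x) s / 2 ->
  `|f (x + s) - f x - dot (grad f x) s| <= L * nrm s ^+ 2.
Proof.
move=> fx_le q_gt0 l_le.
pose phi u := f (x + u *: s); pose dphi u := dot (grad f (x + u *: s)) s.
have phi' (u : R) : is_derive u 1 phi (dphi u) := is_derive_line (f_diff _).
have phi0 : phi 0 = f x by rewrite /phi scale0r addr0.
have dphi0 : dphi 0 = - - dot (grad f x) s by rewrite /dphi scale0r addr0 opprK.
have dphi_lip u : 0 <= u -> phi u <= f x0 -> `|dphi u - dphi 0| <= L * nrm s ^+ 2 * u.
  move=> u_ge0 phi_u; rewrite /dphi scale0r addr0 -dotBl.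
  apply: le_trans (cauchy_schwarz _ _) _.
  apply: le_trans (ler_wpM2r (nrm_ge0 _) (grad_lip phi_u fx_le)) _.
  rewrite addrAC subrr add0r nrmZ ger0_norm //.
  by have -> : L * (u * nrm s) * nrm s = L * nrm s ^+ 2 * u by ring.
have phi0_le : phi 0 <= f x0 by rewrite phi0.
have l_ge0 : 0 <= L * nrm s ^+ 2 by rewrite mulr_ge0 ?sqr_ge0.
have := taylor_segment phi' phi0_le q_gt0 dphi0 l_ge0 l_le dphi_lip.
by rewrite phi0 dphi0 opprK /phi scale1r.
Qed.

Definition Kdir := m^-1 + 2 * Hmat_bound (theta R) L ^+ 2.

(* [dt <= delta] forces [dt <= 1/4] and [L * Kdir * dt <= 1/8]. *)
Definition delta := Num.min (4 + 8 * (L * Kdir))^-1 (dt0 R).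

(* A rejected step keeps [x] and reuses the stored direction, which must therefore
   stay gradient related there. *)
Definition eptctr_inv (st : state R n) := [/\ f (st_x st) <= f x0,
  nrm (st_y st) <= L * nrm (st_s st),
  ~~ st_acc st -> gradient_related Kdir (grad f (st_x st)) (st_dir st)
  & gamma_2 R * delta <= st_dt st].

Lemma theta_gt0 : 0 < theta R.
Proof. by rewrite invr_gt0 exprn_gt0. Qed.

Lemma Kdir_ge0 : 0 <= Kdir.
Proof. by rewrite addr_ge0 ?invr_ge0 ?(ltW m_gt0) // mulr_ge0 ?sqr_ge0. Qed.

Lemma delta_gt0 : 0 < delta.
Proof.
rewrite lt_min !invr_gt0 exprn_gt0 // andbT.
by have := mulr_ge0 L_ge0 Kdir_ge0; lra.
Qed.

Lemma delta_small dt : 0 <= dt -> dt <= delta -> dt <= 1 / 4 /\ L * Kdir * dt <= 1 / 8.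
Proof.
move=> dt_ge0 dt_le; have A_ge0 := mulr_ge0 L_ge0 Kdir_ge0.
have : dt * (4 + 8 * (L * Kdir)) <= 1.
  rewrite -ler_pdivlMr ?mul1r; last by lra.
  by apply: le_trans dt_le _; rewrite ge_min lexx.
have := mulr_ge0 A_ge0 dt_ge0; split; lra.
Qed.

Lemma gamma_2_gt0 : 0 < gamma_2 R.
Proof. by rewrite /gamma_2 divr_gt0. Qed.

Section InvariantStep.
Variable st : state R n.
Hypothesis st_inv : eptctr_inv st.
Hypothesis g_neq0 : grad f (st_x st) != 0.

Lemma inv_dt_gt0 : 0 < st_dt st.
Proof.
by case: st_inv => _ _ _; apply: lt_le_trans; rewrite mulr_gt0 ?gamma_2_gt0 ?delta_gt0.
Qed.

Lemma trial_dir_gradient_related :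
  gradient_related Kdir (grad f (st_x st)) (trial_dir f st).
Proof.
case: st_inv => fx_le y_le dir_rel _; rewrite /trial_dir.
case: (st_acc st) dir_rel => [_|/(_ isT)] //.
case: ifP => [/andP [curv _]|_].
  rewrite dotC in curv.
  apply: (gradient_relatedW _ (gradient_related_Hmat theta_gt0 L_ge0 curv y_le g_neq0)).
  by rewrite lerDr invr_ge0 ltW.
apply: (gradient_relatedW _ (gradient_related_newton m_gt0 (hess_coercive fx_le) g_neq0)).
by rewrite lerDl mulr_ge0 ?sqr_ge0.
Qed.

Lemma trial_step_gradient_related :
  gradient_related (Kdir * (st_dt st / (1 + st_dt st))) (grad f (st_x st)) (trial_step f st).
Proof.
apply: gradient_relatedZ trial_dir_gradient_related.
by rewrite divr_gt0 ?addr_gt0 ?inv_dt_gt0.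
Qed.

Lemma ratio_near_one : st_dt st <= delta -> `|1 - ratio f st| < eta_2 R.
Proof.
move=> dt_le; have dt_gt0 := inv_dt_gt0.
have [fx_le _ _ _] := st_inv.
have [q_gt0 s_le] := trial_step_gradient_related.
set c := st_dt st / (1 + st_dt st) in s_le *.
set s := trial_step f st in q_gt0 s_le *; set q := - dot _ s in q_gt0 s_le *.
have c_ge0 : 0 <= c by rewrite divr_ge0 ?addr_ge0 // ltW.
have c_le_dt : c <= st_dt st.
  by rewrite ler_pdivrMr ?addr_gt0 // ler_peMr ?lerDl // ltW.
have [dt_le4 Adt_le] := delta_small (ltW dt_gt0) dt_le.
have Ls_le : L * nrm s ^+ 2 <= q / 8.
  apply: le_trans (ler_wpM2l L_ge0 s_le) _.
  have : L * Kdir * c <= 1 / 8.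
    by apply: le_trans Adt_le; apply: ler_wpM2l; rewrite ?mulr_ge0 ?Kdir_ge0.
  have := mulr_ge0 (mulr_ge0 L_ge0 Kdir_ge0) c_ge0; nra.
have Ls_le2 : L * nrm s ^+ 2 <= q / 2 by apply: le_trans Ls_le _; lra.
have taylor := le_trans (taylor_step fx_le q_gt0 Ls_le2) Ls_le.
rewrite ratioE // -/s -/c -/q /eta_2.
rewrite (_ : f _ - f _ = q - (f (st_x st + s) - f (st_x st) - dot (grad f (st_x st)) s)).
  by apply: ratio_close_to_one => //; rewrite c_ge0 (le_trans c_le_dt).
by rewrite /q; ring.
Qed.

Lemma accepted_decrease :
  eta_a R < ratio f st -> f (st_x st + trial_step f st) < f (st_x st).
Proof.
have eta_a_gt0 : 0 < eta_a R by rewrite invr_gt0 exprn_gt0.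
move=> /(lt_trans eta_a_gt0) ratio_gt0.
have dt_gt0 := inv_dt_gt0; have [q_gt0 _] := trial_step_gradient_related.
have c_lt1 : st_dt st / (1 + st_dt st) < 1 by rewrite ltr_pdivrMr ?addr_gt0 // mul1r ltrDr.
by move: ratio_gt0; rewrite ratioE // pmulr_lgt0 ?subr_gt0 // invr_gt0 mulr_gt0 //; lra.
Qed.

Lemma next_dt_ge : gamma_2 R * delta <= st_dt (step f st).
Proof.
have [_ _ _ dt_ge] := st_inv; have dt_gt0 := inv_dt_gt0.
rewrite stepE /= /gamma_2 /gamma_1 /eta_1 in dt_ge *.
have [dt_le|dt_gt] := leP (st_dt st) delta.
  rewrite [eta_2 R <= _]leNgt ratio_near_one //=; case: ifP => _; lra.
by case: ifP => _; [|case: ifP => _]; lra.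
Qed.

Lemma eptctr_inv_step : eptctr_inv (step f st).
Proof.
have [fx_le _ _ _] := st_inv.
have [acc|rej] := boolP (eta_a R < ratio f st); last first.
  split; last exact: next_dt_ge; rewrite stepE /= (negbTE rej) //.
    by case: st_inv.
  by move=> _; apply: trial_dir_gradient_related.
have fxs_le := le_trans (ltW (accepted_decrease acc)) fx_le.
split; last exact: next_dt_ge; rewrite stepE /= acc //.
by rewrite (le_trans (grad_lip fxs_le fx_le)) // addrAC subrr add0r.
Qed.
End InvariantStep.

Lemma eptctr_inv_init : eptctr_inv (init x0).
Proof.
split=> //=; first by rewrite nrm0 mulr0.
rewrite /gamma_2; have : delta <= dt0 R by rewrite ge_min lexx orbT.
have := delta_gt0; lra.
Qed.

Lemma eptctr_inv_iter :
  (forall k, grad f (xk f x0 k) != 0) -> forall k, eptctr_inv (eptctr f x0 k).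
Proof.
move=> g_neq0; elim=> [|k IH]; first exact: eptctr_inv_init.
exact: eptctr_inv_step IH (g_neq0 k).
Qed.
End EptctrAnalysis.

Unset Implicit Arguments.

Theorem lemma3 (R : realType) (n : nat) (f : 'cV[R]_n -> R) (x0 : 'cV[R]_n)
    (L_C m M eps : R) :
  C2 f ->
  (forall x y : 'cV[R]_n, f x <= f x0 -> f y <= f x0 ->
     nrm (grad f x - grad f y) <= L_C * nrm (x - y)) ->
  0 < m -> m <= M ->
  (forall x z : 'cV[R]_n, f x <= f x0 ->
     m * nrm z ^+ 2 <= dot z (hess f x *m z) <= M * nrm z ^+ 2) ->
  (* the stopping test ||g_k|| <= eps is never triggered *)
  0 < eps -> (forall k, eps < nrm (grad f (xk f x0 k))) ->
  exists delta : R, 0 < delta /\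
    forall k : nat, (1 <= k)%N -> gamma_2 R * delta <= dtk f x0 k.
Proof.
move=> [f_diff _] grad_lip m_gt0 _ hess_bounds eps_gt0 grad_big.
have lip x y : f x <= f x0 -> f y <= f x0 ->
    nrm (grad f x - grad f y) <= `|L_C| * nrm (x - y).
  by move=> fx fy; rewrite (le_trans (grad_lip x y fx fy)) // ler_wpM2r ?nrm_ge0 ?ler_norm.
have coercive x : f x <= f x0 -> forall z, m * nrm z ^+ 2 <= dot z (hess f x *m z).
  by move=> fx z; case/andP: (hess_bounds x z fx).
have g_neq0 k : grad f (xk f x0 k) != 0.
  by apply: contraTneq (grad_big k) => ->; rewrite nrm0 -leNgt ltW.
have inv := eptctr_inv_iter f_diff lip (normr_ge0 L_C) m_gt0 coercive g_neq0.
exists (delta `|L_C| m); split=> [|k _]; first exact: delta_gt0.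
by have [] := inv k.
Qed.
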